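(* Let $p\in\{3,4,\dots\}$, $a\ge0$, $b>0$ satisfy either ($a>0$ and $b\in[p/2-1,p/2]$) or ($a=0$ and $b\in[p/2-1,p/2)$). Let $y>0$, $N\sim\mathrm{Poisson}(y/2)$ (expectations $E[\cdot\mid y]$ are with respect to this law), and $k\in\{1,2,3\}$. (1) If $a=0$, then $$\frac{E[w_k(N)\mid y]}{E[w_{k-1}(N)\mid y]}=\frac p2+k-b-1+\frac y2+\frac{y(k-b-1)}{2}\frac{E[w_{k-1}(N)/(N+p/2)\mid y]}{E[w_{k-1}(N)\mid y]}.$$ (2) If $a>0$, then $$\frac{E[w_k(N)\mid y]}{E[w_{k-1}(N)\mid y]}=\frac p2+k-b-1+\frac y2+\frac{y(k-b-1)}{2}\frac{E[w_{k-1}(N)/(N+p/2)\mid y]}{E[w_{k-1}(N)\mid y]}+\frac y2\frac{E[\phi(N+k-1)w_{k-1}(N)/(N+p/2)\mid y]}{E[w_{k-1}(N)\mid y]}+\frac{E[\phi(N+k-1)w_{k-1}(N)\mid y]}{E[w_{k-1}(N)\mid y]}.$$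
   Context: $g_0(z)=(a+z)^{-b}$; for $n\in\mathbb{Z}^+=\{0,1,2,\dots\}$ and $k\in\{0,1,2,3\}$, $w_k(n)=\int_0^\infty\frac{g_0(z)(z/2)^{n+p/2+k-1}e^{-z/2}}{2\Gamma(n+p/2)}dz$. For $a>0$, $\phi:\mathbb{Z}^+\to(0,\infty)$ is $\phi(n)=\frac{\int_0^\infty\frac{ab}{a+z}g_0(z)(z/2)^{n+p/2-1}e^{-z/2}dz}{\int_0^\infty g_0(z)(z/2)^{n+p/2-1}e^{-z/2}dz}$. *)

From Stdlib Require Import Reals Factorial.
From Coquelicot Require Import Coquelicot.
Open Scope R_scope.

Definition int0inf (f : R -> R) : R :=
  RInt_gen f (at_right 0) (Rbar_locally p_infty).

Definition Gamma (s : R) : R :=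
  int0inf (fun t => Rpower t (s - 1) * exp (- t)).

Definition g0 (a b z : R) : R := Rpower (a + z) (- b).

Definition w (a b : R) (p k n : nat) : R :=
  int0inf (fun z => g0 a b z * Rpower (z / 2) (INR n + INR p / 2 + INR k - 1)
                    * exp (- z / 2) / (2 * Gamma (INR n + INR p / 2))).

Definition phi (a b : R) (p n : nat) : R :=
  int0inf (fun z => a * b / (a + z) * g0 a b z
                    * Rpower (z / 2) (INR n + INR p / 2 - 1) * exp (- z / 2))
  / int0inf (fun z => g0 a b z * Rpower (z / 2) (INR n + INR p / 2 - 1) * exp (- z / 2)).

Definition EPois (y : R) (f : nat -> R) : R :=
  Series (fun n => exp (- (y / 2)) * (y / 2) ^ n / INR (fact n) * f n).

From Stdlib Require Import Reals Factorial Lra Lia Classical.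
From Coquelicot Require Import Coquelicot.
Open Scope R_scope.

(* With I(s) = int_0^oo g_0(z) (z/2)^s e^(-z/2) dz and s = n + p/2 + k - 1, one has
   w_k(n) = I(s) / (2 Gamma(n + p/2)) and w_(k-1)(n) = I(s - 1) / (2 Gamma(n + p/2)).
   Integrating by parts against z |-> g_0(z) (z/2)^s e^(-z/2), which vanishes at both ends,
   gives I(s) = (s - b) I(s - 1) + J(s - 1), where J is the numerator integral of phi, i.e.
   w_k(n) = (n + p/2 + k - 1 - b + phi(n + k - 1)) w_(k-1)(n); the same computation with
   g_0 = 1 gives Gamma(x + 1) = x Gamma(x), whence w_(k-1)(n + 1) (n + p/2) = w_k(n).
   Taking Poisson expectations and using E[N f(N)] = (y/2) E[f(N + 1)] turns these two
   identities into the formula; phi vanishes when a = 0. *)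

Lemma exp_le_compat x y : x <= y -> exp x <= exp y.
Proof. intros [Hlt | ->]; [left; now apply exp_increasing | lra]. Qed.

Lemma exp_le_1 x : x <= 0 -> exp x <= 1.
Proof. intros Hx. rewrite <- exp_0. now apply exp_le_compat. Qed.

Lemma Rpower_le_exp_half s :
  0 <= s -> exists K, 0 < K /\ forall t, 0 < t -> Rpower t s <= K * exp (t / 2).
Proof.
  intros Hs. destruct (Req_dec s 0) as [-> | Hs0].
  - exists 1. split; [lra |]. intros t Ht. rewrite Rpower_O by lra.
    generalize (exp_ineq1_le (t / 2)). lra.
  - (* ln u <= u - 1 at u = t / (2 s) *)
    exists (exp (s * (ln (2 * s) - 1))). split; [apply exp_pos |].
    intros t Ht. unfold Rpower. rewrite <- exp_plus. apply exp_le_compat.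
    assert (Hu : 0 < t / (2 * s)) by (apply Rdiv_lt_0_compat; lra).
    generalize (exp_ineq1_le (ln (t / (2 * s)))). rewrite exp_ln, ln_div by lra.
    intros Hln. apply (Rmult_le_compat_l s) in Hln; [| lra].
    replace (s * (1 + (ln t - ln (2 * s)))) with (s * ln t - s * (ln (2 * s) - 1)) in Hln
      by ring.
    replace (s * (t / (2 * s))) with (t / 2) in Hln by (field; lra).
    lra.
Qed.

Lemma Rpower_base_le_1_antimono z r s : 0 < z <= 1 -> r <= s -> Rpower z s <= Rpower z r.
Proof.
  intros Hz Hrs. unfold Rpower. apply exp_le_compat.
  assert (ln z <= 0) by (rewrite <- ln_1; apply ln_le; lra). nra.
Qed.

Lemma Rpower_lt_near_0 r eps :
  0 < r -> 0 < eps -> exists d, 0 < d /\ forall z, 0 < z < d -> Rpower z r < eps.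
Proof.
  intros Hr He. exists (exp (ln eps / r)). split; [apply exp_pos |].
  intros z [Hz Hzd]. unfold Rpower. rewrite <- (exp_ln eps) by lra. apply exp_increasing.
  apply ln_increasing in Hzd; [| lra]. rewrite ln_exp in Hzd.
  apply (Rmult_lt_compat_l r) in Hzd; [| lra].
  replace (r * (ln eps / r)) with (ln eps) in Hzd by (field; lra). lra.
Qed.

(** * Improper integrals over (0, +oo) *)

Notation is_int0inf f l := (is_RInt_gen f (at_right 0) (Rbar_locally p_infty) l).

Lemma is_RInt_Rpower A r x :
  -1 < r -> 0 < x <= 1 ->
  is_RInt (fun z => A * Rpower z r) x 1 (A / (r + 1) - A * Rpower x (r + 1) / (r + 1)).
Proof.
  intros Hr Hx.
  replace (A / (r + 1)) with (A * Rpower 1 (r + 1) / (r + 1))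
    by (unfold Rpower; now rewrite ln_1, Rmult_0_r, exp_0, Rmult_1_r).
  apply (is_RInt_derive (fun z => A * Rpower z (r + 1) / (r + 1))).
  - intros z Hz. rewrite Rmin_left, Rmax_right in Hz by lra.
    unfold Rpower. auto_derive; [lra |].
    replace (exp ((r + 1) * ln z)) with (exp (r * ln z) * z)
      by (rewrite Rmult_plus_distr_r, Rmult_1_l, exp_plus, exp_ln; lra).
    field. lra.
  - intros z Hz. rewrite Rmin_left, Rmax_right in Hz by lra.
    apply (@ex_derive_continuous R_AbsRing R_NormedModule). unfold Rpower. auto_derive. lra.
Qed.

Lemma is_RInt_exp B l y :
  0 < l -> is_RInt (fun z => B * exp (- l * z)) 1 y (B / l * exp (- l) - B / l * exp (- l * y)).
Proof.
  intros Hl.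
  replace (B / l * exp (- l) - B / l * exp (- l * y))
    with (- B / l * exp (- l * y) - - B / l * exp (- l * 1)) by (rewrite Rmult_1_r; field; lra).
  apply (is_RInt_derive (fun z => - B / l * exp (- l * z))).
  - intros z _. auto_derive; [auto |]. field. lra.
  - intros z _. apply (@ex_derive_continuous R_AbsRing R_NormedModule). auto_derive. auto.
Qed.

Section PositiveHalfLine.

Variable f : R -> R.
Hypothesis f_cont : forall z, 0 < z -> continuous f z.

Lemma ex_RInt_pos x y : 0 < x -> 0 < y -> ex_RInt f x y.
Proof.
  intros Hx Hy. apply (@ex_RInt_continuous R_CompleteNormedModule).
  intros z Hz. apply f_cont.
  assert (0 < Rmin x y) by (now apply Rmin_glb_lt). lra.
Qed.

Hypothesis f_ge0 : forall z, 0 < z -> 0 <= f z.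

Lemma RInt_le_wider x' x y y' :
  0 < x' -> x' <= x -> x <= y -> y <= y' -> RInt f x y <= RInt f x' y'.
Proof.
  intros H1 H2 H3 H4.
  rewrite <- (RInt_Chasles f x' x y') by (apply ex_RInt_pos; lra).
  rewrite <- (RInt_Chasles f x y y') by (apply ex_RInt_pos; lra).
  assert (0 <= RInt f x' x)
    by (apply RInt_ge_0; [lra | apply ex_RInt_pos; lra | intros; apply f_ge0; lra]).
  assert (0 <= RInt f y y')
    by (apply RInt_ge_0; [lra | apply ex_RInt_pos; lra | intros; apply f_ge0; lra]).
  change plus with Rplus. lra.
Qed.

Lemma int0inf_bounded (M : R) :
  (forall x y, 0 < x -> x <= y -> RInt f x y <= M) ->
  is_int0inf f (int0inf f) /\
  (forall x y, 0 < x -> x <= y -> RInt f x y <= int0inf f) /\ int0inf f <= M.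
Proof.
  intros HM.
  set (S := fun v => exists x y, 0 < x /\ x <= y /\ v = RInt f x y).
  assert (HS : bound S) by (exists M; intros v (x & y & Hx & Hxy & ->); auto).
  assert (HS0 : exists v, S v) by (exists (RInt f 1 1), 1, 1; repeat split; lra).
  destruct (completeness S HS HS0) as [L [HLub HLleast]].
  assert (HRL : forall x y, 0 < x -> x <= y -> RInt f x y <= L)
    by (intros x y Hx Hxy; apply HLub; now exists x, y).
  assert (HL : is_int0inf f L).
  { intros P [eps HP].
    assert (Happrox : exists x0 y0, 0 < x0 /\ x0 <= y0 /\ L - eps < RInt f x0 y0).
    { apply NNPP. intros Hno.
      enough (L <= L - eps) by (destruct eps; simpl in *; lra).
      apply HLleast. intros v (x & y & Hx & Hxy & ->).
      apply Rnot_lt_le. intros Hlt. apply Hno. now exists x, y. }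
    destruct Happrox as (x0 & y0 & Hx0 & Hxy0 & Hlt).
    apply (Filter_prod _ _ _ (fun x => 0 < x <= x0) (fun y => y0 <= y)).
    - exists (mkposreal x0 Hx0). intros x Hx Hxpos. split; [lra |].
      change (Rabs (x - 0) < x0) in Hx. rewrite Rminus_0_r in Hx.
      apply Rabs_def2 in Hx. lra.
    - now exists y0; intros y Hy; left.
    - intros x y Hx Hy. exists (RInt f x y). split.
      + apply (@RInt_correct R_CompleteNormedModule). apply ex_RInt_pos; lra.
      + apply HP. change (Rabs (RInt f x y - L) < eps).
        assert (RInt f x0 y0 <= RInt f x y) by (apply RInt_le_wider; lra).
        assert (RInt f x y <= L) by (apply HRL; lra).
        apply Rabs_def1; lra. }
  unfold int0inf. rewrite (is_RInt_gen_unique f L HL). repeat split; auto.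
  apply HLleast. intros v (x & y & Hx & Hxy & ->). auto.
Qed.

Lemma RInt_le_dominated A r B l :
  -1 < r -> 0 < l -> 0 <= A -> 0 <= B ->
  (forall z, 0 < z <= 1 -> f z <= A * Rpower z r) ->
  (forall z, 1 <= z -> f z <= B * exp (- l * z)) ->
  forall x y, 0 < x -> x <= y -> RInt f x y <= A / (r + 1) + B / l.
Proof.
  intros Hr Hl HA HB Hsmall Hlarge x y Hx Hxy.
  set (x1 := Rmin x 1). set (y1 := Rmax y 1).
  assert (Hx1 : 0 < x1 <= 1) by (split; [now apply Rmin_glb_lt; lra | apply Rmin_r]).
  assert (Hy1 : 1 <= y1) by apply Rmax_r.
  apply Rle_trans with (RInt f x1 y1).
  { apply RInt_le_wider; try lra; [apply Rmin_l | apply Rmax_l]. }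
  rewrite <- (RInt_Chasles f x1 1 y1) by (apply ex_RInt_pos; lra).
  change plus with Rplus.
  assert (Hpow := is_RInt_Rpower A r x1 Hr Hx1).
  assert (Hexp := is_RInt_exp B l y1 Hl).
  assert (RInt f x1 1 <= A / (r + 1) - A * Rpower x1 (r + 1) / (r + 1)).
  { rewrite <- (is_RInt_unique _ _ _ _ Hpow).
    apply RInt_le; [lra | apply ex_RInt_pos; lra | eexists; exact Hpow |].
    intros z Hz. apply Hsmall. lra. }
  assert (RInt f 1 y1 <= B / l * exp (- l) - B / l * exp (- l * y1)).
  { rewrite <- (is_RInt_unique _ _ _ _ Hexp).
    apply RInt_le; [lra | apply ex_RInt_pos; lra | eexists; exact Hexp |].
    intros z Hz. apply Hlarge. lra. }
  assert (0 <= A * Rpower x1 (r + 1) / (r + 1)).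
  { apply Rdiv_le_0_compat; [| lra]. apply Rmult_le_pos; [lra | left; apply exp_pos]. }
  assert (0 <= B / l * exp (- l * y1))
    by (apply Rmult_le_pos; [apply Rdiv_le_0_compat | left; apply exp_pos]; lra).
  assert (B / l * exp (- l) <= B / l).
  { rewrite <- (Rmult_1_r (B / l)) at 2.
    apply Rmult_le_compat_l; [apply Rdiv_le_0_compat; lra | apply exp_le_1; lra]. }
  lra.
Qed.

End PositiveHalfLine.

Lemma is_int0inf_ext (f g : R -> R) l :
  (forall z, 0 < z -> f z = g z) -> is_int0inf f l -> is_int0inf g l.
Proof.
  intros Hfg. apply is_RInt_gen_ext.
  apply (Filter_prod _ _ _ (fun x => 0 < x) (fun y => 0 < y)).
  - now exists (mkposreal 1 Rlt_0_1).
  - now exists 0.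
  - intros x y Hx Hy z Hz. simpl in Hz. apply Hfg.
    assert (0 < Rmin x y) by (now apply Rmin_glb_lt). lra.
Qed.

Lemma int0inf_div (f : R -> R) l d : is_int0inf f l -> int0inf (fun z => f z / d) = l / d.
Proof.
  intros H. apply is_RInt_gen_unique.
  assert (Hd := is_RInt_gen_scal _ (/ d) _ H).
  simpl in Hd. unfold scal in Hd. simpl in Hd. unfold mult in Hd. simpl in Hd.
  replace (l / d) with (/ d * l) by (unfold Rdiv; ring).
  refine (is_int0inf_ext _ _ _ _ Hd). intros z _. unfold Rdiv. ring.
Qed.

Lemma is_int0inf_comb (f g h : R -> R) lf lg lh m c :
  is_int0inf f lf -> is_int0inf g lg -> is_int0inf h lh ->
  is_int0inf (fun z => (m * f z + g z - h z) / c) ((m * lf + lg - lh) / c).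
Proof.
  intros Hf Hg Hh.
  assert (H := is_RInt_gen_scal _ (/ c) _ (is_RInt_gen_minus _ _ _ _
                 (is_RInt_gen_plus _ _ _ _ (is_RInt_gen_scal _ m _ Hf) Hg) Hh)).
  simpl in H. unfold minus, plus, opp, scal in H. simpl in H. unfold mult in H. simpl in H.
  replace ((m * lf + lg - lh) / c) with (/ c * (m * lf + lg + - lh)) by (unfold Rdiv; ring).
  refine (is_int0inf_ext _ _ _ _ H). intros z _. unfold Rdiv. ring.
Qed.

Lemma is_int0inf_derive (U u : R -> R) :
  (forall z, 0 < z -> is_derive U z (u z)) -> (forall z, 0 < z -> continuous u z) ->
  filterlim U (at_right 0) (locally 0) -> filterlim U (Rbar_locally p_infty) (locally 0) ->
  is_int0inf u 0.
Proof.
  intros HU Hu H0 Hinf.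
  assert (Hseg : forall P : R -> Prop, (forall z, 0 < z -> P z) ->
            filter_prod (at_right 0) (Rbar_locally p_infty) (fun ab =>
              forall x, Rmin (fst ab) (snd ab) <= x <= Rmax (fst ab) (snd ab) -> P x)).
  { intros P HP. apply (Filter_prod _ _ _ (fun x => 0 < x) (fun y => 0 < y)).
    - now exists (mkposreal 1 Rlt_0_1).
    - now exists 0.
    - intros x y Hx Hy z Hz. apply HP. simpl in Hz.
      assert (0 < Rmin x y) by (now apply Rmin_glb_lt). lra. }
  assert (HDU : forall z, 0 < z -> Derive U z = u z) by (intros; now apply is_derive_unique, HU).
  apply (is_int0inf_ext (Derive U)); [exact HDU |].
  assert (HD : is_int0inf (Derive U) (0 - 0)).
  { apply is_RInt_gen_Derive; auto.
    - apply Hseg. intros z Hz. eexists. now apply HU.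
    - apply Hseg. intros z Hz. apply (continuous_ext_loc _ u); [| now apply Hu].
      exists (mkposreal z Hz). intros x Hx. change (Rabs (x - z) < z) in Hx.
      apply Rabs_def2 in Hx. symmetry. apply HDU. lra. }
  now rewrite Rminus_0_r in HD.
Qed.

Lemma filterlim_at_right_0_of_le_pow (f : R -> R) A r :
  0 < r -> 0 <= A -> (forall z, 0 < z <= 1 -> 0 <= f z <= A * Rpower z r) ->
  filterlim f (at_right 0) (locally 0).
Proof.
  intros Hr HA Hf. apply filterlim_locally. intros eps.
  assert (Heps : 0 < eps / (A + 1)) by (apply Rdiv_lt_0_compat; [apply cond_pos | lra]).
  destruct (Rpower_lt_near_0 r _ Hr Heps) as [d [Hd Hdz]].
  assert (Hd1 : 0 < Rmin d 1) by (apply Rmin_glb_lt; lra).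
  exists (mkposreal _ Hd1). intros z Hz Hzpos. change (Rabs (z - 0) < Rmin d 1) in Hz.
  rewrite Rminus_0_r, Rabs_pos_eq in Hz by lra.
  assert (Hzd := Rmin_l d 1). assert (Hz1 := Rmin_r d 1).
  change (Rabs (f z - 0) < eps). rewrite Rminus_0_r.
  destruct (Hf z ltac:(lra)) as [Hf0 Hfz]. rewrite Rabs_pos_eq by lra.
  assert (Hpow := Hdz z ltac:(lra)).
  apply Rle_lt_trans with (A * (eps / (A + 1))); [nra |].
  apply Rlt_le_trans with ((A + 1) * (eps / (A + 1))); [nra |].
  right. field. lra.
Qed.

Lemma filterlim_p_infty_of_le_exp (f : R -> R) B l :
  0 < l -> 0 <= B -> (forall z, 1 <= z -> 0 <= f z <= B * exp (- l * z)) ->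
  filterlim f (Rbar_locally p_infty) (locally 0).
Proof.
  intros Hl HB Hf. apply filterlim_locally. intros eps.
  assert (Heps : 0 < eps / (B + 1)) by (apply Rdiv_lt_0_compat; [apply cond_pos | lra]).
  exists (Rmax 1 (- ln (eps / (B + 1)) / l)). intros z Hz.
  assert (H1 := Rmax_l 1 (- ln (eps / (B + 1)) / l)).
  assert (H2 := Rmax_r 1 (- ln (eps / (B + 1)) / l)).
  change (Rabs (f z - 0) < eps). rewrite Rminus_0_r.
  destruct (Hf z ltac:(lra)) as [Hf0 Hfz]. rewrite Rabs_pos_eq by lra.
  assert (Hexp : exp (- l * z) < eps / (B + 1)).
  { rewrite <- (exp_ln (eps / (B + 1))) by exact Heps. apply exp_increasing.
    assert (Hzl : - ln (eps / (B + 1)) / l < z) by lra.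
    apply (Rmult_lt_compat_l l) in Hzl; [| lra].
    replace (l * (- ln (eps / (B + 1)) / l)) with (- ln (eps / (B + 1))) in Hzl
      by (field; lra).
    lra. }
  apply Rle_lt_trans with (B * (eps / (B + 1))); [nra |].
  apply Rlt_le_trans with ((B + 1) * (eps / (B + 1))); [nra |].
  right. field. lra.
Qed.

(** * The kernel integrals and the Gamma function *)

(* [K0 a b 2 s] is the integral behind [w] and [phi], [K1 a b 2 s] the numerator of [phi];
   with [a = 1], [b = 0], [c = 1] the integral [K0] is [Gamma (s + 1)]. *)
Definition kernel (a b c s z : R) : R := g0 a b z * Rpower (z / c) s * exp (- z / c).
Definition kernel_phi (a b c s z : R) : R :=
  a * b / (a + z) * g0 a b z * Rpower (z / c) s * exp (- z / c).
Definition K0 (a b c s : R) : R := int0inf (kernel a b c s).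
Definition K1 (a b c s : R) : R := int0inf (kernel_phi a b c s).

Section Kernel.

Variables a b c : R.
Hypotheses (Ha : 0 <= a) (Hb : 0 <= b) (Hc : 0 < c).

Lemma kernel_pos s z : 0 < kernel a b c s z.
Proof. unfold kernel, g0, Rpower. repeat apply Rmult_lt_0_compat; apply exp_pos. Qed.

Lemma kernel_phi_bounds s z : 0 < z -> 0 <= kernel_phi a b c s z <= b * kernel a b c s z.
Proof.
  intros Hz.
  replace (kernel_phi a b c s z) with (a * b / (a + z) * kernel a b c s z)
    by (unfold kernel_phi, kernel; ring).
  assert (Hk := kernel_pos s z).
  assert (0 <= a * b / (a + z) <= b).
  { split; [apply Rdiv_le_0_compat; nra |].
    apply Rmult_le_reg_r with (a + z); [lra |].
    unfold Rdiv. rewrite Rmult_assoc, Rinv_l by lra. nra. }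
  split; [apply Rmult_le_pos | apply Rmult_le_compat_r]; lra.
Qed.

Lemma continuous_kernel s z : 0 < z -> continuous (kernel a b c s) z.
Proof.
  intros Hz. assert (0 < z * / c) by (apply Rdiv_lt_0_compat; lra).
  apply (@ex_derive_continuous R_AbsRing R_NormedModule).
  unfold kernel, g0, Rpower. auto_derive. repeat split; lra.
Qed.

Lemma continuous_kernel_phi s z : 0 < z -> continuous (kernel_phi a b c s) z.
Proof.
  intros Hz. assert (0 < z * / c) by (apply Rdiv_lt_0_compat; lra).
  apply (@ex_derive_continuous R_AbsRing R_NormedModule).
  unfold kernel_phi, g0, Rpower. auto_derive. repeat split; lra.
Qed.

Lemma exp_neg_div_le_1 z : 0 < z -> exp (- z / c) <= 1.
Proof.
  intros Hz. apply exp_le_1. replace (- z / c) with (- (z / c)) by (field; lra).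
  assert (0 < z / c) by (apply Rdiv_lt_0_compat; lra). lra.
Qed.

Lemma kernel_le_pow_near_0 s r :
  r <= s -> (a = 0 -> r <= s - b) ->
  exists A, 0 <= A /\ forall z, 0 < z <= 1 -> kernel a b c s z <= A * Rpower z r.
Proof.
  intros Hrs Hr0.
  assert (Hscale : forall z, 0 < z -> Rpower (z / c) s = Rpower (/ c) s * Rpower z s).
  { intros z Hz. unfold Rdiv. rewrite Rmult_comm, Rpower_mult_distr;
      [reflexivity | apply Rinv_0_lt_compat |]; lra. }
  assert (HC := exp_pos (s * ln (/ c))). fold (Rpower (/ c) s) in HC.
  destruct (Rle_lt_or_eq_dec 0 a Ha) as [Hapos | <-].
  - exists (Rpower a (- b) * Rpower (/ c) s).
    split; [left; apply Rmult_lt_0_compat; [apply exp_pos | lra] |].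
    intros z Hz. unfold kernel, g0. rewrite Hscale by lra.
    assert (Rpower (a + z) (- b) <= Rpower a (- b)).
    { rewrite !Rpower_Ropp. apply Rinv_le_contravar; [apply exp_pos | apply Rle_Rpower_l; lra]. }
    assert (Rpower z s <= Rpower z r) by (apply Rpower_base_le_1_antimono; lra).
    assert (exp (- z / c) <= 1) by (apply exp_neg_div_le_1; lra).
    assert (Hp1 := exp_pos (- b * ln (a + z))). assert (Hp2 := exp_pos (s * ln z)).
    assert (Hp3 := exp_pos (- z / c)). fold (Rpower (a + z) (- b)) (Rpower z s) in *.
    replace (Rpower a (- b) * Rpower (/ c) s * Rpower z r)
      with (Rpower a (- b) * (Rpower (/ c) s * Rpower z r) * 1) by ring.
    assert (0 <= Rpower (/ c) s * Rpower z s) by nra.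
    apply Rmult_le_compat; [nra | lra | | lra].
    apply Rmult_le_compat; [lra | lra | lra | apply Rmult_le_compat_l; lra].
  - exists (Rpower (/ c) s). split; [lra |].
    intros z Hz. unfold kernel, g0. rewrite Rplus_0_l, Hscale by lra.
    replace (Rpower z (- b) * (Rpower (/ c) s * Rpower z s))
      with (Rpower (/ c) s * Rpower z (s - b))
      by (unfold Rminus; rewrite Rplus_comm, Rpower_plus; ring).
    assert (Rpower z (s - b) <= Rpower z r) by (apply Rpower_base_le_1_antimono; auto; lra).
    assert (exp (- z / c) <= 1) by (apply exp_neg_div_le_1; lra).
    assert (Hp2 := exp_pos ((s - b) * ln z)). assert (Hp3 := exp_pos (- z / c)).
    fold (Rpower z (s - b)) in *.
    replace (Rpower (/ c) s * Rpower z r) with (Rpower (/ c) s * Rpower z r * 1) by ring.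
    apply Rmult_le_compat; nra.
Qed.

Lemma kernel_le_exp_near_infty s :
  0 <= s -> exists B, 0 <= B /\ forall z, 1 <= z -> kernel a b c s z <= B * exp (- / (2 * c) * z).
Proof.
  intros Hs. destruct (Rpower_le_exp_half s Hs) as [K [HK HKb]].
  exists K. split; [lra |]. intros z Hz. unfold kernel, g0.
  assert (Rpower (a + z) (- b) <= 1).
  { rewrite Rpower_Ropp, <- Rinv_1. apply Rinv_le_contravar; [lra |].
    replace 1 with (Rpower 1 b) at 1 by (unfold Rpower; now rewrite ln_1, Rmult_0_r, exp_0).
    apply Rle_Rpower_l; lra. }
  assert (Hpow := HKb (z / c) ltac:(apply Rdiv_lt_0_compat; lra)).
  assert (Hp1 := exp_pos (- b * ln (a + z))). assert (Hp2 := exp_pos (s * ln (z / c))).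
  assert (Hp3 := exp_pos (- z / c)). fold (Rpower (a + z) (- b)) (Rpower (z / c) s) in *.
  apply Rle_trans with (1 * (K * exp (z / c / 2)) * exp (- z / c)).
  - apply Rmult_le_compat_r; [lra |]. apply Rmult_le_compat; lra.
  - rewrite Rmult_1_l, Rmult_assoc, <- exp_plus. right. do 2 f_equal. field. lra.
Qed.

Lemma kernel_integrable s :
  0 <= s -> (0 < a \/ -1 < s - b) ->
  is_int0inf (kernel a b c s) (K0 a b c s) /\
  (forall x y, 0 < x -> x <= y -> RInt (kernel a b c s) x y <= K0 a b c s).
Proof.
  intros Hs Hsb.
  assert (Hr : exists r, -1 < r /\ r <= s /\ (a = 0 -> r <= s - b))
    by (destruct Hsb; [exists s | exists (s - b)]; repeat split; lra).
  destruct Hr as (r & Hr & Hrs & Hr0).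
  destruct (kernel_le_pow_near_0 s r Hrs Hr0) as [A [HA HAb]].
  destruct (kernel_le_exp_near_infty s Hs) as [B [HB HBb]].
  assert (Hcont : forall z, 0 < z -> continuous (kernel a b c s) z)
    by (intros; now apply continuous_kernel).
  assert (Hpos : forall z, 0 < z -> 0 <= kernel a b c s z) by (intros; left; apply kernel_pos).
  destruct (int0inf_bounded _ Hcont Hpos (A / (r + 1) + B / / (2 * c))) as (Hint & Hle & _).
  - apply (RInt_le_dominated _ Hcont Hpos);
      [lra | apply Rinv_0_lt_compat; lra | exact HA | exact HB | exact HAb | exact HBb].
  - split; assumption.
Qed.

Lemma K0_pos s : 0 <= s -> (0 < a \/ -1 < s - b) -> 0 < K0 a b c s.
Proof.
  intros Hs Hsb. destruct (kernel_integrable s Hs Hsb) as [_ Hle].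
  apply Rlt_le_trans with (RInt (kernel a b c s) 1 2); [| apply Hle; lra].
  apply RInt_gt_0; [lra | intros; apply kernel_pos | intros; apply continuous_kernel; lra].
Qed.

Lemma kernel_phi_integrable s :
  0 <= s -> (0 < a \/ -1 < s - b) ->
  is_int0inf (kernel_phi a b c s) (K1 a b c s) /\ 0 <= K1 a b c s <= b * K0 a b c s.
Proof.
  intros Hs Hsb. destruct (kernel_integrable s Hs Hsb) as [_ HK0].
  assert (Hcont : forall z, 0 < z -> continuous (kernel_phi a b c s) z)
    by (intros; now apply continuous_kernel_phi).
  assert (Hpos : forall z, 0 < z -> 0 <= kernel_phi a b c s z)
    by (intros z Hz; apply (kernel_phi_bounds s z Hz)).
  destruct (int0inf_bounded _ Hcont Hpos (b * K0 a b c s)) as (Hint & Hle & Hub).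
  - intros x y Hx Hxy.
    assert (Hk : ex_RInt (kernel a b c s) x y)
      by (apply ex_RInt_pos; [intros; now apply continuous_kernel | lra | lra]).
    apply Rle_trans with (RInt (fun z => scal b (kernel a b c s z)) x y).
    + apply RInt_le; [exact Hxy | apply ex_RInt_pos; [exact Hcont | lra | lra] | |].
      * apply (ex_RInt_scal (V := R_NormedModule)). exact Hk.
      * intros z Hz. exact (proj2 (kernel_phi_bounds s z ltac:(lra))).
    + rewrite (RInt_scal (V := R_CompleteNormedModule)) by exact Hk.
      apply Rmult_le_compat_l; [exact Hb | now apply HK0].
  - split; [exact Hint | split; [| exact Hub]].
    apply Rle_trans with (RInt (kernel_phi a b c s) 1 2); [| apply Hle; lra].
    apply RInt_ge_0; [lra | apply ex_RInt_pos; [exact Hcont | lra | lra] | intros; apply Hpos; lra].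
Qed.

Lemma is_derive_kernel s z :
  0 < z ->
  is_derive (kernel a b c s) z
    (((s - b) * kernel a b c (s - 1) z + kernel_phi a b c (s - 1) z - kernel a b c s z) / c).
Proof.
  intros Hz. assert (Hzc : 0 < z / c) by (apply Rdiv_lt_0_compat; lra).
  unfold kernel, kernel_phi, g0, Rpower. auto_derive; [repeat split; lra |].
  replace ((s - 1) * ln (z / c)) with (s * ln (z / c) + - ln (z / c)) by ring.
  rewrite exp_plus, exp_Ropp, exp_ln by exact Hzc. unfold Rdiv.
  set (Eb := exp (- b * ln (a + z))). set (Es := exp (s * ln (z * / c))).
  set (Ez := exp (- z * / c)). field. lra.
Qed.

Lemma K0_recurrence s :
  1 <= s -> (0 < a \/ b < s) -> K0 a b c s = (s - b) * K0 a b c (s - 1) + K1 a b c (s - 1).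
Proof.
  intros Hs Hsb.
  destruct (kernel_integrable (s - 1)) as [H1 _]; [lra | lra |].
  destruct (kernel_phi_integrable (s - 1)) as [H2 _]; [lra | lra |].
  destruct (kernel_integrable s) as [H3 _]; [lra | lra |].
  set (u z := ((s - b) * kernel a b c (s - 1) z + kernel_phi a b c (s - 1) z
               - kernel a b c s z) / c).
  (* [u] is the derivative of [kernel a b c s], which vanishes at both ends *)
  assert (Hzero : is_int0inf u 0).
  { apply (is_int0inf_derive (kernel a b c s)).
    - intros z Hz. now apply is_derive_kernel.
    - intros z Hz. assert (0 < z * / c) by (apply Rdiv_lt_0_compat; lra).
      apply (@ex_derive_continuous R_AbsRing R_NormedModule).
      unfold u, kernel, kernel_phi, g0, Rpower. auto_derive. repeat split; lra.
    - assert (Hr : exists r, 0 < r /\ r <= s /\ (a = 0 -> r <= s - b))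
        by (destruct Hsb; [exists s | exists (s - b)]; repeat split; lra).
      destruct Hr as (r & Hr & Hrs & Hr0).
      destruct (kernel_le_pow_near_0 s r Hrs Hr0) as [A [HA HAb]].
      apply (filterlim_at_right_0_of_le_pow _ A r Hr HA).
      intros z Hz. split; [left; apply kernel_pos | now apply HAb].
    - destruct (kernel_le_exp_near_infty s) as [B [HB HBb]]; [lra |].
      apply (filterlim_p_infty_of_le_exp _ B (/ (2 * c))); [apply Rinv_0_lt_compat; lra | exact HB |].
      intros z Hz. split; [left; apply kernel_pos | now apply HBb]. }
  assert (Hlin := is_RInt_gen_unique _ _ (is_int0inf_comb _ _ _ _ _ _ (s - b) c H1 H2 H3)).
  fold u in Hlin. rewrite (is_RInt_gen_unique _ _ Hzero) in Hlin.
  assert (Hnum : (s - b) * K0 a b c (s - 1) + K1 a b c (s - 1) - K0 a b c s = 0).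
  { apply (Rmult_eq_reg_r (/ c)); [| apply Rinv_neq_0_compat; lra].
    fold ((((s - b) * K0 a b c (s - 1) + K1 a b c (s - 1) - K0 a b c s)) / c).
    rewrite <- Hlin. ring. }
  lra.
Qed.

End Kernel.

Lemma K1_eq_0 a b c s : a * b = 0 -> K1 a b c s = 0.
Proof.
  intros Hab. unfold K1, int0inf. apply is_RInt_gen_unique.
  apply (is_int0inf_ext (fun _ => 0)).
  - intros z _. unfold kernel_phi. rewrite Hab. unfold Rdiv. ring.
  - apply (is_int0inf_derive (fun _ => 0)).
    + intros z _. auto_derive; easy.
    + intros z _. apply continuous_const.
    + apply filterlim_const.
    + apply filterlim_const.
Qed.

Lemma is_int0inf_Gamma x :
  1 <= x -> is_int0inf (fun t => Rpower t (x - 1) * exp (- t)) (K0 1 0 1 (x - 1)).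
Proof.
  intros Hx. destruct (kernel_integrable 1 0 1 ltac:(lra) ltac:(lra) ltac:(lra) (x - 1))
    as [H _]; [lra | lra |].
  apply (is_int0inf_ext (kernel 1 0 1 (x - 1))); [| exact H].
  intros t Ht. unfold kernel, g0. rewrite Ropp_0, Rpower_O by lra.
  unfold Rdiv. rewrite Rinv_1, !Rmult_1_r. ring.
Qed.

Lemma Gamma_eq_K0 x : 1 <= x -> Gamma x = K0 1 0 1 (x - 1).
Proof. intros Hx. exact (is_RInt_gen_unique _ _ (is_int0inf_Gamma x Hx)). Qed.

Lemma Gamma_pos x : 1 <= x -> 0 < Gamma x.
Proof. intros Hx. rewrite Gamma_eq_K0 by exact Hx. apply K0_pos; lra. Qed.

Lemma Gamma_succ x : 1 <= x -> Gamma (x + 1) = x * Gamma x.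
Proof.
  intros Hx. rewrite !Gamma_eq_K0 by lra. replace (x + 1 - 1) with x by ring.
  rewrite (K0_recurrence 1 0 1 ltac:(lra) ltac:(lra) ltac:(lra) x ltac:(lra) ltac:(lra)).
  rewrite K1_eq_0 by ring. ring.
Qed.

(** * Poisson expectations *)

Definition pois (y : R) (n : nat) : R := exp (- (y / 2)) * (y / 2) ^ n / INR (fact n).
Definition ex_EPois (y : R) (f : nat -> R) : Prop := ex_series (fun n => pois y n * f n).

Lemma pois_pos y n : 0 < y -> 0 < pois y n.
Proof.
  intros Hy. unfold pois. apply Rdiv_lt_0_compat; [| apply INR_fact_lt_0].
  apply Rmult_lt_0_compat; [apply exp_pos | apply pow_lt; lra].
Qed.

Lemma pois_succ y n : pois y (S n) * INR (S n) = y / 2 * pois y n.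
Proof.
  unfold pois. rewrite fact_simpl, mult_INR. simpl pow.
  assert (INR (fact n) <> 0) by apply INR_fact_neq_0.
  assert (INR (S n) <> 0) by (apply not_0_INR; discriminate).
  field. split; assumption.
Qed.

Lemma ex_EPois_plus y f g :
  ex_EPois y f -> ex_EPois y g -> ex_EPois y (fun n => f n + g n).
Proof.
  intros Hf Hg. apply (@ex_series_ext R_AbsRing R_NormedModule (fun n => pois y n * f n + pois y n * g n)).
  - intros n. simpl. ring.
  - now apply (@ex_series_plus R_AbsRing R_NormedModule).
Qed.

Lemma ex_EPois_scal y c f : ex_EPois y f -> ex_EPois y (fun n => c * f n).
Proof.
  intros Hf. apply (@ex_series_ext R_AbsRing R_NormedModule (fun n => c * (pois y n * f n))).
  - intros n. simpl. ring.
  - now apply (@ex_series_scal_l R_AbsRing R_NormedModule).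
Qed.

Lemma ex_EPois_le y f g M :
  0 < y -> (forall n, Rabs (f n) <= M * g n) -> ex_EPois y g -> ex_EPois y f.
Proof.
  intros Hy Hfg Hg.
  apply (@ex_series_le R_AbsRing R_CompleteNormedModule _ (fun n => M * (pois y n * g n))).
  - intros n. change (Rabs (pois y n * f n) <= M * (pois y n * g n)).
    assert (Hp := pois_pos y n Hy).
    rewrite Rabs_mult, Rabs_pos_eq by lra.
    replace (M * (pois y n * g n)) with (pois y n * (M * g n)) by ring.
    apply Rmult_le_compat_l; [lra | apply Hfg].
  - now apply (@ex_series_scal_l R_AbsRing R_NormedModule).
Qed.

Lemma ex_EPois_geom y r f K :
  0 < y -> (forall n, Rabs (f n) <= K * r ^ n) -> ex_EPois y f.
Proof.
  intros Hy Hf. apply (ex_EPois_le y f (fun n => r ^ n) K Hy Hf).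
  destruct (exist_exp (r * (y / 2))) as [l Hl].
  apply (@ex_series_ext R_AbsRing R_NormedModule (fun n => exp (- (y / 2)) * (/ INR (fact n) * (r * (y / 2)) ^ n))).
  - intros n. unfold pois. rewrite Rpow_mult_distr.
    assert (INR (fact n) <> 0) by apply INR_fact_neq_0. simpl. field. assumption.
  - apply (@ex_series_scal_l R_AbsRing R_NormedModule).
    exists l. now apply is_series_Reals.
Qed.

Lemma EPois_ext y f g : (forall n, f n = g n) -> EPois y f = EPois y g.
Proof. intros Hfg. apply Series_ext. intros n. now rewrite Hfg. Qed.

Lemma EPois_plus y f g :
  ex_EPois y f -> ex_EPois y g -> EPois y (fun n => f n + g n) = EPois y f + EPois y g.
Proof.
  intros Hf Hg. unfold EPois. rewrite <- Series_plus by assumption.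
  apply Series_ext. intros n. ring.
Qed.

Lemma EPois_scal y c f : EPois y (fun n => c * f n) = c * EPois y f.
Proof.
  unfold EPois. rewrite <- Series_scal_l. apply Series_ext. intros n. ring.
Qed.

Lemma EPois_0 y f : (forall n, f n = 0) -> EPois y f = 0.
Proof.
  intros Hf. rewrite (EPois_ext y f (fun n => 0 * f n)) by (intros n; rewrite Hf; ring).
  rewrite EPois_scal. ring.
Qed.

Lemma EPois_pos y f : 0 < y -> (forall n, 0 < f n) -> ex_EPois y f -> 0 < EPois y f.
Proof.
  intros Hy Hf Hex. unfold EPois. rewrite Series_incr_1 by exact Hex.
  assert (H0 : 0 < pois y 0 * f 0%nat) by (apply Rmult_lt_0_compat; [now apply pois_pos | apply Hf]).
  assert (Htail : Series (fun n => 0 * (pois y (S n) * f (S n)))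
                  <= Series (fun n => pois y (S n) * f (S n))).
  { apply Series_le; [| now apply ex_series_incr_1 in Hex].
    intros n. rewrite Rmult_0_l. split; [lra |].
    left. apply Rmult_lt_0_compat; [now apply pois_pos | apply Hf]. }
  rewrite Series_scal_l, Rmult_0_l in Htail.
  change (0 < pois y 0 * f 0%nat + Series (fun n => pois y (S n) * f (S n))). lra.
Qed.

Lemma EPois_mul_INR y f : EPois y (fun n => INR n * f n) = y / 2 * EPois y (fun n => f (S n)).
Proof.
  unfold EPois. rewrite Series_incr_1_aux by (simpl; ring).
  rewrite <- Series_scal_l. apply Series_ext. intros n.
  change (pois y (S n) * (INR (S n) * f (S n)) = y / 2 * (pois y n * f (S n))).
  rewrite <- Rmult_assoc, pois_succ. ring.
Qed.

Lemma ex_EPois_mul_INR y f : ex_EPois y (fun n => f (S n)) -> ex_EPois y (fun n => INR n * f n).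
Proof.
  intros Hf. apply ex_series_incr_1.
  apply (@ex_series_ext R_AbsRing R_NormedModule (fun n => y / 2 * (pois y n * f (S n)))).
  - intros n. change (y / 2 * (pois y n * f (S n)) = pois y (S n) * (INR (S n) * f (S n))).
    symmetry.
    rewrite <- Rmult_assoc, pois_succ. ring.
  - now apply (@ex_series_scal_l R_AbsRing R_NormedModule).
Qed.

Section PoissonIdentity.

Variables (y c d M : R) (v ph wk : nat -> R).
Hypotheses (Hy : 0 < y) (Hc : 1 <= c) (Hv : forall n, 0 < v n)
  (Hph : forall n, Rabs (ph n) <= M)
  (Hwk : forall n, wk n = (INR n + c + d + ph n) * v n)
  (Hshift : forall n, v (S n) * (INR n + c) = wk n).

Lemma v_succ_eq n : v (S n) = v n + d * (v n / (INR n + c)) + ph n * v n / (INR n + c).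
Proof.
  assert (Hn := pos_INR n).
  apply (Rmult_eq_reg_r (INR n + c)); [| lra]. rewrite Hshift, Hwk. field. lra.
Qed.

Lemma v_div_le n : Rabs (v n / (INR n + c)) <= 1 * v n.
Proof.
  assert (Hn := pos_INR n). assert (Hvn := Hv n).
  rewrite Rabs_pos_eq by (apply Rdiv_le_0_compat; lra).
  rewrite Rmult_1_l. apply Rmult_le_reg_r with (INR n + c); [lra |].
  unfold Rdiv. rewrite Rmult_assoc, Rinv_l by lra. nra.
Qed.

Lemma v_succ_le n : v (S n) <= (1 + Rabs d + M) * v n.
Proof.
  assert (Hn := pos_INR n). assert (Hq := v_div_le n). assert (Hphn := Hph n).
  set (q := v n / (INR n + c)) in *.
  assert (Hq0 : 0 <= q) by (apply Rdiv_le_0_compat; [left; apply Hv | lra]).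
  rewrite Rabs_pos_eq, Rmult_1_l in Hq by exact Hq0.
  assert (d * q <= Rabs d * v n).
  { apply Rle_trans with (Rabs d * q);
      [apply Rmult_le_compat_r; [lra | apply Rle_abs] | apply Rmult_le_compat_l; [apply Rabs_pos | lra]]. }
  assert (ph n * q <= M * v n).
  { apply Rle_trans with (Rabs (ph n) * q); [apply Rmult_le_compat_r; [lra | apply Rle_abs] |].
    apply Rmult_le_compat; [apply Rabs_pos | lra | lra | lra]. }
  rewrite v_succ_eq. fold q. replace (ph n * v n / (INR n + c)) with (ph n * q) by (unfold q; field; lra).
  lra.
Qed.

Lemma ex_EPois_v : ex_EPois y v.
Proof.
  apply (ex_EPois_geom y (1 + Rabs d + M) v (v 0%nat) Hy). intros n.
  rewrite Rabs_pos_eq by (left; apply Hv).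
  induction n as [| n IH]; [simpl; lra |].
  assert (0 <= M) by (apply Rle_trans with (Rabs (ph 0%nat)); [apply Rabs_pos | apply Hph]).
  assert (0 <= Rabs d) by apply Rabs_pos.
  apply Rle_trans with ((1 + Rabs d + M) * v n); [apply v_succ_le |]. simpl. nra.
Qed.

Lemma EPois_v_pos : 0 < EPois y v.
Proof. exact (EPois_pos y v Hy Hv ex_EPois_v). Qed.

Lemma EPois_identity :
  EPois y wk
  = (c + d + y / 2) * EPois y v + y / 2 * d * EPois y (fun n => v n / (INR n + c))
    + y / 2 * EPois y (fun n => ph n * v n / (INR n + c)) + EPois y (fun n => ph n * v n).
Proof.
  assert (Ev := ex_EPois_v).
  assert (Eq : ex_EPois y (fun n => v n / (INR n + c)))
    by (apply (ex_EPois_le y _ v 1 Hy v_div_le Ev)).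
  assert (Er : ex_EPois y (fun n => ph n * v n)).
  { apply (ex_EPois_le y _ v M Hy); [| exact Ev]. intros n.
    rewrite Rabs_mult, (Rabs_pos_eq (v n)) by (left; apply Hv).
    apply Rmult_le_compat_r; [left; apply Hv | apply Hph]. }
  assert (Et : ex_EPois y (fun n => ph n * v n / (INR n + c))).
  { apply (ex_EPois_le y _ (fun n => v n / (INR n + c)) M Hy); [| exact Eq]. intros n.
    unfold Rdiv. rewrite Rmult_assoc, Rabs_mult. fold (v n / (INR n + c)).
    assert (Hq := v_div_le n). rewrite Rmult_1_l in Hq.
    rewrite (Rabs_pos_eq (v n / (INR n + c))) in * by (apply Rdiv_le_0_compat;
      [left; apply Hv | generalize (pos_INR n); lra]).
    apply Rmult_le_compat_r; [apply Rdiv_le_0_compat; [left; apply Hv | generalize (pos_INR n); lra] | apply Hph]. }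
  assert (ES : ex_EPois y (fun n => v (S n))).
  { apply (ex_EPois_le y _ v (1 + Rabs d + M) Hy); [| exact Ev]. intros n.
    rewrite Rabs_pos_eq by (left; apply Hv). apply v_succ_le. }
  assert (HS : EPois y (fun n => v (S n))
               = EPois y v + d * EPois y (fun n => v n / (INR n + c))
                 + EPois y (fun n => ph n * v n / (INR n + c))).
  { rewrite (EPois_ext y _ _ v_succ_eq).
    rewrite (EPois_plus y (fun n => v n + d * (v n / (INR n + c)))
                        (fun n => ph n * v n / (INR n + c)));
      [| apply ex_EPois_plus; [exact Ev | now apply ex_EPois_scal] | exact Et].
    rewrite (EPois_plus y v (fun n => d * (v n / (INR n + c)))), EPois_scal;
      [reflexivity | exact Ev | now apply ex_EPois_scal]. }
  rewrite (EPois_ext y wk (fun n => INR n * v n + ((c + d) * v n + ph n * v n)))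
    by (intros n; rewrite Hwk; ring).
  rewrite (EPois_plus y (fun n => INR n * v n) (fun n => (c + d) * v n + ph n * v n));
    [| now apply ex_EPois_mul_INR | apply ex_EPois_plus; [now apply ex_EPois_scal | exact Er]].
  rewrite (EPois_plus y (fun n => (c + d) * v n) (fun n => ph n * v n));
    [| now apply ex_EPois_scal | exact Er].
  rewrite EPois_scal, EPois_mul_INR, HS. ring.
Qed.

End PoissonIdentity.

(** * The weights w_k *)

Lemma w_eq_K0 a b p j n :
  0 <= a -> 0 <= b -> 0 <= INR n + INR p / 2 + INR j - 1 ->
  (0 < a \/ -1 < INR n + INR p / 2 + INR j - 1 - b) ->
  w a b p j n = K0 a b 2 (INR n + INR p / 2 + INR j - 1) / (2 * Gamma (INR n + INR p / 2)).
Proof.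
  intros Ha Hb Hs Hsb. unfold w.
  apply (int0inf_div (kernel a b 2 _)). apply kernel_integrable; lra.
Qed.

Lemma phi_a0 b p m : phi 0 b p m = 0.
Proof.
  change (K1 0 b 2 (INR m + INR p / 2 - 1) / K0 0 b 2 (INR m + INR p / 2 - 1) = 0).
  rewrite K1_eq_0 by ring. unfold Rdiv. ring.
Qed.

Section WRecurrence.

Variables (a b : R) (p k : nat).
Hypotheses (Ha : 0 <= a) (Hb : 0 <= b) (Hab : 0 < a \/ b < INR p / 2)
  (Hp : (2 <= p)%nat) (Hk : (1 <= k)%nat).

Lemma half_p_ge_1 : 1 <= INR p / 2.
Proof. apply le_INR in Hp. simpl in Hp. lra. Qed.

Lemma INR_k_ge_1 : 1 <= INR k.
Proof. apply le_INR in Hk. simpl in Hk. lra. Qed.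

Lemma INR_pred_k : INR (k - 1) = INR k - 1.
Proof. rewrite minus_INR by exact Hk. reflexivity. Qed.

Lemma w_pred_K0 n :
  w a b p (k - 1) n
  = K0 a b 2 (INR n + INR p / 2 + INR k - 2) / (2 * Gamma (INR n + INR p / 2)).
Proof.
  assert (Hn := pos_INR n). assert (Hp2 := half_p_ge_1). assert (Hk1 := INR_k_ge_1).
  rewrite w_eq_K0; rewrite ?INR_pred_k; [| exact Ha | exact Hb | lra |].
  - replace (INR n + INR p / 2 + (INR k - 1) - 1) with (INR n + INR p / 2 + INR k - 2) by ring.
    reflexivity.
  - destruct Hab; [left | right]; lra.
Qed.

Lemma w_K0 n :
  w a b p k n
  = K0 a b 2 (INR n + INR p / 2 + INR k - 1) / (2 * Gamma (INR n + INR p / 2)).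
Proof.
  assert (Hn := pos_INR n). assert (Hp2 := half_p_ge_1). assert (Hk1 := INR_k_ge_1).
  rewrite w_eq_K0; [reflexivity | exact Ha | exact Hb | lra |].
  destruct Hab; [left | right]; lra.
Qed.

Lemma phi_K1_K0 n :
  phi a b p (n + k - 1)
  = K1 a b 2 (INR n + INR p / 2 + INR k - 2) / K0 a b 2 (INR n + INR p / 2 + INR k - 2).
Proof.
  unfold phi. rewrite minus_INR, plus_INR by lia. simpl INR.
  replace (INR n + INR k - 1 + INR p / 2 - 1) with (INR n + INR p / 2 + INR k - 2) by ring.
  reflexivity.
Qed.

Lemma K0_pred_pos n : 0 < K0 a b 2 (INR n + INR p / 2 + INR k - 2).
Proof.
  assert (Hn := pos_INR n). assert (Hp2 := half_p_ge_1). assert (Hk1 := INR_k_ge_1).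
  apply K0_pos; [lra | lra | lra | lra |]. destruct Hab; [left | right]; lra.
Qed.

Lemma w_pred_pos n : 0 < w a b p (k - 1) n.
Proof.
  assert (Hn := pos_INR n). assert (Hp2 := half_p_ge_1).
  rewrite w_pred_K0. apply Rdiv_lt_0_compat; [apply K0_pred_pos |].
  assert (0 < Gamma (INR n + INR p / 2)) by (apply Gamma_pos; lra). lra.
Qed.

Lemma phi_abs_le n : Rabs (phi a b p (n + k - 1)) <= b.
Proof.
  assert (Hn := pos_INR n). assert (Hp2 := half_p_ge_1). assert (Hk1 := INR_k_ge_1).
  assert (HK0 := K0_pred_pos n).
  destruct (kernel_phi_integrable a b 2 Ha Hb ltac:(lra) (INR n + INR p / 2 + INR k - 2))
    as [_ [HK1 HK1b]]; [lra | destruct Hab; [left | right]; lra |].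
  rewrite phi_K1_K0, Rabs_pos_eq by (now apply Rdiv_le_0_compat).
  apply Rmult_le_reg_r with (K0 a b 2 (INR n + INR p / 2 + INR k - 2)); [exact HK0 |].
  unfold Rdiv. rewrite Rmult_assoc, Rinv_l by lra. lra.
Qed.

Lemma w_recurrence n :
  w a b p k n
  = (INR n + INR p / 2 + (INR k - 1 - b) + phi a b p (n + k - 1)) * w a b p (k - 1) n.
Proof.
  assert (Hn := pos_INR n). assert (Hp2 := half_p_ge_1). assert (Hk1 := INR_k_ge_1).
  assert (HK0 := K0_pred_pos n).
  assert (HG : 0 < Gamma (INR n + INR p / 2)) by (apply Gamma_pos; lra).
  rewrite w_K0, w_pred_K0, phi_K1_K0.
  rewrite (K0_recurrence a b 2 Ha Hb ltac:(lra)); [| lra | destruct Hab; [left | right]; lra].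
  replace (INR n + INR p / 2 + INR k - 1 - 1) with (INR n + INR p / 2 + INR k - 2) by ring.
  field. lra.
Qed.

Lemma w_pred_succ n : w a b p (k - 1) (S n) * (INR n + INR p / 2) = w a b p k n.
Proof.
  assert (Hn := pos_INR n). assert (Hp2 := half_p_ge_1).
  assert (HG : 0 < Gamma (INR n + INR p / 2)) by (apply Gamma_pos; lra).
  rewrite w_pred_K0, w_K0, S_INR.
  replace (INR n + 1 + INR p / 2) with (INR n + INR p / 2 + 1) by ring.
  rewrite Gamma_succ by lra.
  replace (INR n + INR p / 2 + 1 + INR k - 2) with (INR n + INR p / 2 + INR k - 1) by ring.
  field. lra.
Qed.

Lemma EPois_w_pred_pos y : 0 < y -> 0 < EPois y (w a b p (k - 1)).
Proof.
  intros Hy. apply (EPois_v_pos y (INR p / 2) (INR k - 1 - b) b _ (fun n => phi a b p (n + k - 1))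
                      (w a b p k) Hy half_p_ge_1 w_pred_pos phi_abs_le w_recurrence w_pred_succ).
Qed.

Lemma EPois_w_identity y :
  0 < y ->
  EPois y (w a b p k)
  = (INR p / 2 + (INR k - 1 - b) + y / 2) * EPois y (w a b p (k - 1))
    + y / 2 * (INR k - 1 - b) * EPois y (fun n => w a b p (k - 1) n / (INR n + INR p / 2))
    + y / 2 * EPois y (fun n => phi a b p (n + k - 1) * w a b p (k - 1) n / (INR n + INR p / 2))
    + EPois y (fun n => phi a b p (n + k - 1) * w a b p (k - 1) n).
Proof.
  intros Hy. exact (EPois_identity y (INR p / 2) (INR k - 1 - b) b _ (fun n => phi a b p (n + k - 1))
                      (w a b p k) Hy half_p_ge_1 w_pred_pos phi_abs_le w_recurrence w_pred_succ).
Qed.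

End WRecurrence.

Theorem propositionA4 (p : nat) (a b y : R) (k : nat) :
  (3 <= p)%nat -> 0 <= a -> 0 < b ->
  ((0 < a /\ INR p / 2 - 1 <= b <= INR p / 2) \/
   (a = 0 /\ INR p / 2 - 1 <= b < INR p / 2)) ->
  0 < y -> (1 <= k <= 3)%nat ->
  let E := EPois y in
  let wk := w a b p k in
  let wk1 := w a b p (k - 1) in
  (a = 0 ->
     E wk / E wk1 =
     INR p / 2 + INR k - b - 1 + y / 2
     + y * (INR k - b - 1) / 2 * (E (fun n => wk1 n / (INR n + INR p / 2)) / E wk1)) /\
  (0 < a ->
     E wk / E wk1 =
     INR p / 2 + INR k - b - 1 + y / 2
     + y * (INR k - b - 1) / 2 * (E (fun n => wk1 n / (INR n + INR p / 2)) / E wk1)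
     + y / 2 * (E (fun n => phi a b p (n + k - 1) * wk1 n / (INR n + INR p / 2)) / E wk1)
     + E (fun n => phi a b p (n + k - 1) * wk1 n) / E wk1).
Proof.
  intros Hp Ha Hb Hab Hy Hk. cbv zeta.
  assert (Hab' : 0 < a \/ b < INR p / 2) by (destruct Hab as [[? _] | [_ ?]]; [left | right]; lra).
  assert (Hpos := EPois_w_pred_pos a b p k Ha ltac:(lra) Hab' ltac:(lia) ltac:(lia) y Hy).
  rewrite (EPois_w_identity a b p k Ha ltac:(lra) Hab' ltac:(lia) ltac:(lia) y Hy). split.
  - intros ->.
    rewrite (EPois_0 y (fun n => phi 0 b p (n + k - 1) * _ n / _))
      by (intros; rewrite phi_a0; unfold Rdiv; ring).
    rewrite (EPois_0 y (fun n => phi 0 b p (n + k - 1) * _ n))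
      by (intros; rewrite phi_a0; ring).
    field. lra.
  - intros _. field. lra.
Qed.
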